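(* Let $A\in\mathbb{R}^{n\times n}$ be asymptotically stable and $B\in\mathbb{R}^{n\times q}$. For $m\ge1$ let $V_m=[\mathcal V_1,\ldots,\mathcal V_m]\in\mathbb{R}^{n\times 2mq}$, $\mathcal V_i\in\mathbb{R}^{n\times 2q}$, have orthonormal columns spanning the block extended Krylov subspace $\mathbf{EK}_m^\square(A,B)=\operatorname{range}([B,A^{-1}B,AB,A^{-2}B,\ldots,A^{m-1}B,A^{-m}B])$ (nested in $m$), satisfying the Arnoldi relation $$AV_m=V_mT_m+\mathcal V_{m+1}E_{m+1}^{\mathsf T}\underline{T}_m,$$ where $\underline{T}_m=V_{m+1}^{\mathsf T}AV_m\in\mathbb{R}^{2(m+1)q\times 2mq}$, $T_m=V_m^{\mathsf T}AV_m$ is its leading $2mq\times2mq$ block, and $E_{m+1}=e_{m+1}\otimes I_{2q}$. Let $p_j\in\mathbb{C}$ with $\operatorname{Re}(p_j)<0$, let $m_{j-1}\le m_j$ be integers, and let $W_{j-1}=V_{m_{j-1}}\Upsilon_{j-1}$ for some $\Upsilon_{j-1}\in\mathbb{C}^{2m_{j-1}q\times q}$. Seek $S_j=V_{m_j}Y_{m_j}$, $Y_{m_j}\in\mathbb{C}^{2m_jq\times q}$, approximating the solution of $(A+p_jI)S_j=W_{j-1}$, with residual $R_{m_j}=(A+p_jI)S_j-W_{j-1}$. Then: (i) If the Galerkin condition $V_{m_j}^{\mathsf T}R_{m_j}=0$ is imposed, $Y_{m_j}$ is the solution of $$(T_{m_j}+p_jI_{2m_jq})Y_{m_j}=[\Upsilon_{j-1};O_{2(m_j-m_{j-1})q\times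 q}],$$ and $\|R_{m_j}\|_F=\|E_{m_j+1}^{\mathsf T}\underline{T}_{m_j}Y_{m_j}\|_F$. (ii) If a minimal residual condition is imposed, i.e. $Y_{m_j}$ minimizes $\|R_{m_j}\|_F$ over $Y\in\mathbb{C}^{2m_jq\times q}$, then $$Y_{m_j}=\arg\min_{Y\in\mathbb{C}^{2m_jq\times q}}\big\|(\underline{T}_{m_j}+p_j[I_{2m_jq};O_{2q\times2m_jq}])Y-[\Upsilon_{j-1};O_{2(m_j-m_{j-1}+1)q\times q}]\big\|_F,$$ and $\|R_{m_j}\|_F=\|Q_2^{*}[\Upsilon_{j-1};O_{2(m_j-m_{j-1}+1)q\times q}]\|_F$, where the columns of $Q_2$ form an orthonormal basis of the orthogonal complement (in $\mathbb{C}^{2(m_j+1)q}$) of the range of $\underline{T}_{m_j}+p_j[I_{2m_jq};O_{2q\times2m_jq}]$.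
   Context: $[M;N]$ denotes vertical concatenation of $M$ on top of $N$; $O_{a\times b}$ is the $a\times b$ zero matrix; $e_i$ is the $i$-th canonical basis vector; $\otimes$ is the Kronecker product; $\|\cdot\|_F$ is the Frobenius norm; $Q_2^*$ is the conjugate transpose. The matrix $V_{m_{j-1}}$ consists of the first $2m_{j-1}q$ columns of $V_{m_j}$. *)

From HB Require Import structures.
From mathcomp Require Import all_boot all_order all_algebra.
From mathcomp Require Import reals.
From mathcomp Require Import complex.

Set Implicit Arguments.
Unset Strict Implicit.
Unset Printing Implicit Defensive.

Import Order.TTheory GRing.Theory Num.Theory.
Local Open Scope ring_scope.

Section KrylovDefs.
Variable R : realType.
Local Notation C := (R[i]).

Definition cmx (m n : nat) (M : 'M[R]_(m, n)) : 'M[C]_(m, n) :=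
  map_mx (real_complex R) M.

Definition ctrmx (m n : nat) (M : 'M[C]_(m, n)) : 'M[C]_(n, m) :=
  (map_mx (@conjc R) M)^T.

Definition frob (m n : nat) (M : 'M[C]_(m, n)) : R :=
  Num.sqrt (\sum_(i < m) \sum_(j < n) (complex.Re (M i j) ^+ 2 + complex.Im (M i j) ^+ 2)).

Definition asympt_stable (n : nat) (A : 'M[R]_n) : Prop :=
  forall l : C, eigenvalue (cmx A) l -> complex.Re l < 0.

Definition in_EK (n q m : nat) (A : 'M[R]_n) (B : 'M[R]_(n, q))
    (x : 'cV[R]_n) : Prop :=
  exists (z w : 'I_m -> 'cV[R]_q),
    x = \sum_(i < m) (A ^+ i *m B *m z i + (invmx A) ^+ i.+1 *m B *m w i).

Definition in_range (F : fieldType) (n k : nat) (M : 'M[F]_(n, k))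
    (x : 'cV[F]_n) : Prop :=
  exists y : 'cV[F]_k, x = M *m y.

(* The basis is given by a sequence of columns v 0, v 1, ... ;
   V_m consists of the first 2mq columns (so the V_m are nested). *)
Definition Vm (n q : nat) (v : nat -> 'cV[R]_n) (m : nat) : 'M[R]_(n, 2 * m * q) :=
  \matrix_(i < n, j < 2 * m * q) v j i 0.

(* block column  \mathcal V_{m+1} = columns 2mq, ..., 2(m+1)q - 1 *)
Definition Vblk (n q : nat) (v : nat -> 'cV[R]_n) (m : nat) : 'M[R]_(n, 2 * q) :=
  \matrix_(i < n, j < 2 * q) v (2 * m * q + j)%N i 0.

Definition Tu (n q : nat) (A : 'M[R]_n) (v : nat -> 'cV[R]_n) (m : nat)
  : 'M[R]_(2 * m.+1 * q, 2 * m * q) :=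
  (Vm q v m.+1)^T *m A *m Vm q v m.

Definition Tm (n q : nat) (A : 'M[R]_n) (v : nat -> 'cV[R]_n) (m : nat)
  : 'M[R]_(2 * m * q) :=
  (Vm q v m)^T *m A *m Vm q v m.

(* E_{m+1} = e_{m+1} (x) I_{2q}, of size 2(m+1)q x 2q *)
Definition Emx (q m : nat) : 'M[R]_(2 * m.+1 * q, 2 * q) :=
  \matrix_(i, j) ((i : nat) == (2 * m * q + j)%N)%:R.

Definition IOmx (F : pzRingType) (N k : nat) : 'M[F]_(N, k) :=
  \matrix_(i, j) ((i : nat) == (j : nat))%:R.

(* [U ; O] : pad the a x b matrix U with zero rows to N rows *)
Definition padmx (F : pzRingType) (a b N : nat) (U : 'M[F]_(a, b)) : 'M[F]_(N, b) :=
  \matrix_(i, j) oapp (fun k : 'I_a => U k j) 0 (insub (i : nat)).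

End KrylovDefs.

From mathcomp Require Import all_boot all_order all_algebra.
From mathcomp Require Import reals.
From mathcomp Require Import complex.
From mathcomp Require Import zify ring lra.
Import Order.TTheory GRing.Theory Num.Theory.
Local Open Scope ring_scope.

Set Implicit Arguments.
Unset Strict Implicit.
Unset Printing Implicit Defensive.

(* Write V for V_{m_j}. By the nesting of the bases and the Arnoldi relation,
   (A + p I) V = V_{m_j+1} M with M = Tu + p [I; O], and W = V [Ups; O] =
   V_{m_j+1} [Ups; O]. (i) Multiplying the residual by V^T gives the projected
   system; once it holds, the residual collapses to Vblk E^T Tu Y, and Vblk has
   orthonormal columns. (ii) The residual is V_{m_j+1} (M Y - [Ups; O]), so
   minimising it is the small least-squares problem; a minimiser satisfies the
   normal equations M^* (M Y - rhs) = 0, hence M Y - rhs lies in ker M^* =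
   range Q2 and its norm is that of Q2^* (M Y - rhs) = - Q2^* rhs. *)

Lemma mxtraceB (V : zmodType) n (X Y : 'M[V]_n) : \tr (X - Y) = \tr X - \tr Y.
Proof. by rewrite /mxtrace -sumrB; apply: eq_bigr => i _; rewrite !mxE. Qed.

Lemma mulmx_unit_colE (T : pzSemiRingType) m N k (l : 'I_N)
    (X : 'M[T]_(m, N)) (S : 'M[T]_(N, k)) i j :
  (forall i', S i' j = (i' == l)%:R) -> (X *m S) i j = X i l.
Proof.
move=> Sj; rewrite mxE (bigD1 l) //= Sj eqxx mulr1 big1 ?addr0 // => i' /negbTE.
by rewrite Sj => ->; rewrite mulr0.
Qed.

Arguments mulmx_unit_colE {T m N k} l {X S i j}.

Lemma padmxE (T : pzRingType) a b N (U : 'M[T]_(a, b)) : padmx N U = IOmx T N a *m U.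
Proof.
apply/matrixP=> i j; rewrite !mxE; case: insubP => [k _ ik | iN] /=.
  rewrite (bigD1 k) //= !mxE ik eqxx mul1r big1 ?addr0 // => k' k'k.
  by rewrite mxE -ik eq_sym val_eqE (negbTE k'k) mul0r.
rewrite big1 // => k _; rewrite mxE; case: eqP => [ik|_]; last by rewrite mul0r.
by move: iN; rewrite ik ltn_ord.
Qed.

Lemma mulmx_col0 (T : pzSemiRingType) m N k (X : 'M[T]_(m, N)) (Y : 'M[T]_(N, k)) :
  (forall j, X *m col j Y = 0) -> X *m Y = 0.
Proof.
move=> XY0; apply/matrixP=> i j.
by have := congr1 (fun Z : 'cV_m => Z i 0) (XY0 j); rewrite colE mulmxA -colE !mxE.
Qed.

Lemma range_ker_mul0 (F : fieldType) m k s (Q : 'M[F]_(m, k)) (N : 'M[F]_(s, m)) :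
  (forall x, in_range Q x -> N *m x = 0) -> N *m Q = 0.
Proof. by move=> QN; apply: mulmx_col0 => j; apply: QN; exists (delta_mx j 0); rewrite colE. Qed.

Section ComplexMatrix.
Variable R : realType.
Local Notation C := R[i].
Local Notation "x %:C" := (real_complex R x).

Lemma cmxM m k l (X : 'M[R]_(m, k)) (Y : 'M[R]_(k, l)) : cmx (X *m Y) = cmx X *m cmx Y.
Proof. exact: map_mxM. Qed.

Lemma cmxD m k (X Y : 'M[R]_(m, k)) : cmx (X + Y) = cmx X + cmx Y.
Proof. exact: map_mxD. Qed.

Lemma cmx1 m : cmx (1%:M : 'M[R]_m) = 1%:M.
Proof. exact: map_mx1. Qed.

Lemma cmx_IOmx N k : cmx (IOmx R N k) = IOmx C N k.
Proof. by apply/matrixP=> i j; rewrite !mxE rmorph_nat. Qed.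

Lemma ctrmxM m k l (X : 'M[C]_(m, k)) (Y : 'M[C]_(k, l)) :
  ctrmx (X *m Y) = ctrmx Y *m ctrmx X.
Proof. by rewrite /ctrmx map_mxM trmx_mul. Qed.

Lemma ctrmxK m k (X : 'M[C]_(m, k)) : ctrmx (ctrmx X) = X.
Proof. by apply/matrixP=> i j; rewrite !mxE conjcK. Qed.

Lemma ctrmx_cmx m k (X : 'M[R]_(m, k)) : ctrmx (cmx X) = cmx X^T.
Proof. by apply/matrixP=> i j; rewrite !mxE; apply: conjc_real. Qed.

Lemma ctrmx0 m k : ctrmx (0 : 'M[C]_(m, k)) = 0.
Proof. by apply/matrixP=> i j; rewrite !mxE rmorph0. Qed.

Lemma ctrmxN m k (X : 'M[C]_(m, k)) : ctrmx (- X) = - ctrmx X.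
Proof. by apply/matrixP=> i j; rewrite !mxE rmorphN. Qed.

Lemma ctrmxB m k (X Y : 'M[C]_(m, k)) : ctrmx (X - Y) = ctrmx X - ctrmx Y.
Proof. by apply/matrixP=> i j; rewrite !mxE rmorphB. Qed.

Lemma ctrmxZ_real m k (a : R) (X : 'M[C]_(m, k)) : ctrmx (a%:C *: X) = a%:C *: ctrmx X.
Proof. by apply/matrixP=> i j; rewrite !mxE rmorphM; congr (_ * _); apply: conjc_real. Qed.

Lemma cmx_orthonormal m k (V : 'M[R]_(m, k)) :
  V^T *m V = 1%:M -> ctrmx (cmx V) *m cmx V = 1%:M.
Proof. by move=> VV; rewrite ctrmx_cmx -cmxM VV cmx1. Qed.

Lemma frob_ge0 m k (X : 'M[C]_(m, k)) : 0 <= frob X.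
Proof. exact: sqrtr_ge0. Qed.

Lemma frob_sqr m k (X : 'M[C]_(m, k)) :
  frob X ^+ 2 = \sum_i \sum_j (complex.Re (X i j) ^+ 2 + complex.Im (X i j) ^+ 2).
Proof.
rewrite sqr_sqrtr // sumr_ge0 // => i _.
by rewrite sumr_ge0 // => j _; rewrite addr_ge0 ?sqr_ge0.
Qed.

Lemma mxtrace_ctrmx_mul m k (X : 'M[C]_(m, k)) : \tr (ctrmx X *m X) = (frob X ^+ 2)%:C.
Proof.
rewrite frob_sqr /mxtrace rmorph_sum.
under [RHS]eq_bigr do rewrite rmorph_sum.
rewrite [RHS]exchange_big /=; apply: eq_bigr => j _.
rewrite mxE; apply: eq_bigr => i _.
by rewrite !mxE add_Re2_Im2 sqr_normc mulrC.
Qed.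

Lemma frob_eq0 m k (X : 'M[C]_(m, k)) : frob X = 0 -> X = 0.
Proof.
move=> X0; apply/matrixP=> i j; rewrite mxE.
pose w i j := complex.Re (X i j) ^+ 2 + complex.Im (X i j) ^+ 2.
have w_ge0 i' j' : 0 <= w i' j' by rewrite addr_ge0 ?sqr_ge0.
have sum_w0 : \sum_i \sum_j w i j = 0 by rewrite -frob_sqr X0 expr0n.
have row_w0 := psumr_eq0P (fun i _ => sumr_ge0 _ (fun j _ => w_ge0 i j)) sum_w0 (i := i) isT.
have /(congr1 (real_complex R)) := psumr_eq0P (fun j _ => w_ge0 i j) row_w0 (i := j) isT.
by rewrite add_Re2_Im2 rmorph0 => /eqP; rewrite sqrf_eq0 normr_eq0 => /eqP.
Qed.

Lemma eq_frob m k m' k' (X : 'M[C]_(m, k)) (Y : 'M[C]_(m', k')) :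
  \tr (ctrmx X *m X) = \tr (ctrmx Y *m Y) -> frob X = frob Y.
Proof.
rewrite !mxtrace_ctrmx_mul => /complexI /eqP.
by rewrite eqrXn2 ?frob_ge0 // => /eqP.
Qed.

Lemma frob_isometry m k l (U : 'M[C]_(m, k)) (X : 'M[C]_(k, l)) :
  ctrmx U *m U = 1%:M -> frob (U *m X) = frob X.
Proof. by move=> UU; apply: eq_frob; rewrite ctrmxM -mulmxA (mulmxA _ U) UU mul1mx. Qed.

Lemma frobN m k (X : 'M[C]_(m, k)) : frob (- X) = frob X.
Proof. by apply: eq_frob; rewrite ctrmxN mulNmx mulmxN opprK. Qed.

Lemma frob_gradient_step m k l (M : 'M[C]_(m, k)) (r : 'M[C]_(m, l)) (c : R) :
  let G := ctrmx M *m r in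
  frob (r - c%:C *: (M *m G)) ^+ 2 =
  frob r ^+ 2 - 2 * c * frob G ^+ 2 + c ^+ 2 * frob (M *m G) ^+ 2.
Proof.
move=> G; set X := M *m G.
have rX : ctrmx r *m X = ctrmx G *m G by rewrite mulmxA ctrmxM ctrmxK.
have Xr : ctrmx X *m r = ctrmx G *m G by rewrite ctrmxM -mulmxA.
have expand : ctrmx (r - c%:C *: X) *m (r - c%:C *: X) = ctrmx r *m r
    - c%:C *: (ctrmx G *m G) - (c%:C *: (ctrmx G *m G) - c%:C *: (c%:C *: (ctrmx X *m X))).
  by rewrite ctrmxB ctrmxZ_real mulmxBl !mulmxBr -!scalemxAl -!scalemxAr rX Xr.
apply: complexI; have := congr1 mxtrace expand.
rewrite !mxtraceB !mxtraceZ !mxtrace_ctrmx_mul => ->.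
rewrite !rmorphD !rmorphN !rmorphM rmorph_nat; ring.
Qed.

(* Moving [Y] by [- e *: G] changes the squared residual by
   [- 2 e |G|^2 + e^2 |M G|^2], which for [e = |G|^2 / (|M G|^2 + 1)] is
   negative unless [G = 0]. *)
Lemma lsq_normal_eq m k l (M : 'M[C]_(m, k)) (Y : 'M[C]_(k, l)) (rhs : 'M[C]_(m, l)) :
  (forall Y', frob (M *m Y - rhs) <= frob (M *m Y' - rhs)) ->
  ctrmx M *m (M *m Y - rhs) = 0.
Proof.
move=> Ymin; set r := M *m Y - rhs; set G := ctrmx M *m r.
have [G2_ge0 MG2_ge0] : 0 <= frob G ^+ 2 /\ 0 <= frob (M *m G) ^+ 2 by rewrite !sqr_ge0.
pose e := frob G ^+ 2 / (frob (M *m G) ^+ 2 + 1).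
have e_ge0 : 0 <= e by rewrite divr_ge0 // addr_ge0.
have eE : e * (frob (M *m G) ^+ 2 + 1) = frob G ^+ 2.
  by rewrite divfK // lt0r_neq0 // ltr_wpDl.
have descent : frob r ^+ 2 <= frob (r - e%:C *: (M *m G)) ^+ 2.
  rewrite ler_sqr ?nnegrE ?frob_ge0 //.
  by have := Ymin (Y - e%:C *: G); rewrite mulmxBr -scalemxAr addrAC.
rewrite (frob_gradient_step M r e) in descent.
have e0 : e = 0 by nra.
apply: frob_eq0; apply/eqP; rewrite -(@eqrXn2 _ 2) ?frob_ge0 //.
by rewrite -eE e0 mul0r expr0n.
Qed.

Lemma orthonormal_range_proj m k s l (Q : 'M[C]_(m, k)) (N : 'M[C]_(s, m)) (r : 'M[C]_(m, l)) :
  ctrmx Q *m Q = 1%:M -> (forall x, N *m x = 0 -> in_range Q x) ->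
  N *m r = 0 -> Q *m (ctrmx Q *m r) = r.
Proof.
move=> QQ kerN Nr; apply/eqP; rewrite -subr_eq0 -{2}[r]mul1mx mulmxA -mulmxBl.
apply/eqP/mulmx_col0 => j; have [y ->] : in_range Q (col j r).
  by apply: kerN; rewrite colE mulmxA Nr mul0mx.
by rewrite mulmxBl mul1mx !mulmxA -(mulmxA Q) QQ mulmx1 subrr.
Qed.

Lemma frob_lsq_residual m k s l (M : 'M[C]_(m, s)) (Q : 'M[C]_(m, k))
    (Y : 'M[C]_(s, l)) (rhs : 'M[C]_(m, l)) :
  ctrmx Q *m Q = 1%:M -> (forall x, in_range Q x <-> ctrmx M *m x = 0) ->
  ctrmx M *m (M *m Y - rhs) = 0 -> frob (M *m Y - rhs) = frob (ctrmx Q *m rhs).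
Proof.
move=> QQ rangeQ normal.
have QM : ctrmx Q *m M = 0.
  by rewrite -[M]ctrmxK -ctrmxM (range_ker_mul0 (fun x => proj1 (rangeQ x))) ctrmx0.
rewrite -(orthonormal_range_proj QQ (fun x => proj2 (rangeQ x)) normal) frob_isometry //.
by rewrite mulmxBr mulmxA QM mul0mx sub0r frobN.
Qed.

End ComplexMatrix.

Section BlockKrylov.
Variables (R : realType) (n q : nat) (A : 'M[R]_n) (v : nat -> 'cV[R]_n).
Local Notation C := R[i].
Local Notation V := (Vm q v).

Lemma Vm_mul_IOmx m m' : (m <= m')%N -> V m' *m IOmx R (2 * m' * q) (2 * m * q) = V m.
Proof.
move=> le_mm'; have le_dim : (2 * m * q <= 2 * m' * q)%N by rewrite !leq_mul.
by apply/matrixP=> i j; rewrite (mulmx_unit_colE (widen_ord le_dim j)) ?mxE // => i'; rewrite mxE.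
Qed.

Lemma Vm_mul_Emx m : V m.+1 *m Emx R q m = Vblk q v m.
Proof.
apply/matrixP=> i j.
have lt_idx : (2 * m * q + j < 2 * m.+1 * q)%N by have := ltn_ord j; lia.
by rewrite (mulmx_unit_colE (Ordinal lt_idx)) ?mxE // => i'; rewrite mxE.
Qed.

Lemma trmx_Emx_mul m : (Emx R q m)^T *m Emx R q m = 1%:M.
Proof.
apply/matrixP=> i j.
have lt_idx : (2 * m * q + j < 2 * m.+1 * q)%N by have := ltn_ord j; lia.
rewrite (mulmx_unit_colE (Ordinal lt_idx)) ?mxE //= => [|i'].
  by rewrite eqn_add2l eq_sym.
by rewrite mxE.
Qed.

Lemma trmx_Vblk_mul m :
  (V m.+1)^T *m V m.+1 = 1%:M -> (Vblk q v m)^T *m Vblk q v m = 1%:M.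
Proof.
by move=> VV; rewrite -Vm_mul_Emx trmx_mul -mulmxA (mulmxA (V m.+1)^T) VV mul1mx trmx_Emx_mul.
Qed.

Definition Arnoldi_relation m : Prop :=
  A *m V m = V m *m Tm q A v m + Vblk q v m *m (Emx R q m)^T *m Tu q A v m.

(* Both [V m] and [Vblk q v m] are blocks of [V m.+1], so the Arnoldi relation
   reads [A *m V m = V m.+1 *m K]; multiplying by [(V m.+1)^T] identifies [K]
   with [Tu q A v m]. *)
Lemma mulmx_Vm_Tu m : Arnoldi_relation m ->
  (V m.+1)^T *m V m.+1 = 1%:M -> A *m V m = V m.+1 *m Tu q A v m.
Proof.
move=> Arnoldi VV.
pose K := IOmx R (2 * m.+1 * q) (2 * m * q) *m Tm q A v m +
          Emx R q m *m ((Emx R q m)^T *m Tu q A v m).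
have AVK : A *m V m = V m.+1 *m K.
  by rewrite Arnoldi mulmxDr !mulmxA Vm_mul_IOmx // Vm_mul_Emx.
have TuK : Tu q A v m = K by rewrite /Tu -mulmxA AVK mulmxA VV mul1mx.
by rewrite TuK.
Qed.

Definition shifted_residual (p : C) m1 m (U : 'M[C]_(2 * m1 * q, q))
    (Y : 'M[C]_(2 * m * q, q)) : 'M[C]_(n, q) :=
  (cmx A + p%:M) *m (cmx (V m) *m Y) - cmx (V m1) *m U.

Lemma cmx_Vm_padmx m1 m l (U : 'M[C]_(2 * m1 * q, l)) :
  (m1 <= m)%N -> cmx (V m1) *m U = cmx (V m) *m padmx (2 * m * q) U.
Proof. by move=> le_m1m; rewrite padmxE -cmx_IOmx mulmxA -cmxM Vm_mul_IOmx. Qed.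

Variables (p : C) (m1 m : nat) (U : 'M[C]_(2 * m1 * q, q)).
Hypothesis le_m1m : (m1 <= m)%N.

Lemma ctrmx_Vm_residual (Y : 'M[C]_(2 * m * q, q)) :
  (V m)^T *m V m = 1%:M ->
  ctrmx (cmx (V m)) *m shifted_residual p U Y =
  (cmx (Tm q A v m) + p%:M) *m Y - padmx (2 * m * q) U.
Proof.
move=> /cmx_orthonormal VV.
rewrite /shifted_residual (cmx_Vm_padmx _ le_m1m) mulmxBr (mulmxA _ _ (padmx _ U)) VV mul1mx.
rewrite !mulmxDl mulmxDr !mul_scalar_mx -scalemxAr (mulmxA (ctrmx _) (cmx _) Y) VV mul1mx.
by rewrite /Tm !cmxM ctrmx_cmx !mulmxA.
Qed.

Lemma Galerkin_residual (Y : 'M[C]_(2 * m * q, q)) : Arnoldi_relation m ->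
  (cmx (Tm q A v m) + p%:M) *m Y = padmx (2 * m * q) U ->
  shifted_residual p U Y = cmx (Vblk q v m) *m (cmx ((Emx R q m)^T *m Tu q A v m) *m Y).
Proof.
move=> Arnoldi Galerkin.
have shiftedA : (cmx A + p%:M) *m cmx (V m) = cmx (V m) *m (cmx (Tm q A v m) + p%:M) +
    cmx (Vblk q v m) *m cmx ((Emx R q m)^T *m Tu q A v m).
  by rewrite mulmxDl mulmxDr mul_scalar_mx mul_mx_scalar -cmxM Arnoldi cmxD -mulmxA !cmxM addrAC.
rewrite /shifted_residual (cmx_Vm_padmx _ le_m1m) -Galerkin mulmxA shiftedA.
by rewrite mulmxDl -!mulmxA addrAC subrr add0r.
Qed.

Lemma minres_residual (Y : 'M[C]_(2 * m * q, q)) :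
  Arnoldi_relation m -> (V m.+1)^T *m V m.+1 = 1%:M ->
  let M := cmx (Tu q A v m) + p *: IOmx C (2 * m.+1 * q) (2 * m * q) in
  shifted_residual p U Y = cmx (V m.+1) *m (M *m Y - padmx (2 * m.+1 * q) U).
Proof.
move=> Arnoldi VV M.
have shiftedA : (cmx A + p%:M) *m cmx (V m) = cmx (V m.+1) *m M.
  rewrite mulmxDl mul_scalar_mx -cmxM (mulmx_Vm_Tu Arnoldi VV) cmxM.
  by rewrite -(Vm_mul_IOmx (leqnSn m)) cmxM cmx_IOmx mulmxDr -scalemxAr.
by rewrite /shifted_residual (cmx_Vm_padmx _ (leqW le_m1m)) mulmxA shiftedA -mulmxA mulmxBr.
Qed.

End BlockKrylov.

Arguments ctrmx_Vm_residual {R n q A v p m1 m U} le_m1m {Y}.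
Arguments minres_residual {R n q A v p m1 m U} le_m1m {Y}.

Theorem corollary3p2 (R : realType) (n q : nat)
  (A : 'M[R]_n) (B : 'M[R]_(n, q)) (v : nat -> 'cV[R]_n)
  (p : R[i]) (mj1 mj : nat) (Ups : 'M[R[i]]_(2 * mj1 * q, q)) :
  asympt_stable A ->
  (* basis: orthonormal columns spanning EK_m(A,B), for 1 <= m <= mj+1 *)
  (forall m, (1 <= m <= mj.+1)%N ->
     (Vm q v m)^T *m Vm q v m = 1%:M /\
     (forall x : 'cV[R]_n, in_range (Vm q v m) x <-> in_EK m A B x)) ->
  (* Arnoldi relation *)
  (forall m, (1 <= m <= mj)%N ->
     A *m Vm q v m =
     Vm q v m *m Tm q A v m + Vblk q v m *m (Emx R q m)^T *m Tu q A v m) ->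
  complex.Re p < 0 ->
  (1 <= mj1 <= mj)%N ->
  let W := cmx (Vm q v mj1) *m Ups in
  let Res := fun Y : 'M[R[i]]_(2 * mj * q, q) =>
               (cmx A + p%:M) *m (cmx (Vm q v mj) *m Y) - W in
  (* (i) Galerkin *)
  (forall Y : 'M[R[i]]_(2 * mj * q, q),
     ctrmx (cmx (Vm q v mj)) *m Res Y = 0 ->
     (cmx (Tm q A v mj) + p%:M) *m Y = padmx (2 * mj * q) Ups /\
     frob (Res Y) = frob (cmx ((Emx R q mj)^T *m Tu q A v mj) *m Y)) /\
  (* (ii) minimal residual *)
  (forall Y : 'M[R[i]]_(2 * mj * q, q),
     (forall Y' : 'M[R[i]]_(2 * mj * q, q), frob (Res Y) <= frob (Res Y')) ->
     let M := cmx (Tu q A v mj) + p *: IOmx R[i] (2 * mj.+1 * q) (2 * mj * q) in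
     let rhs := padmx (2 * mj.+1 * q) Ups in
     (forall Y' : 'M[R[i]]_(2 * mj * q, q),
        frob (M *m Y - rhs) <= frob (M *m Y' - rhs)) /\
     (forall (k : nat) (Q2 : 'M[R[i]]_(2 * mj.+1 * q, k)),
        ctrmx Q2 *m Q2 = 1%:M ->
        (forall x : 'cV[R[i]]_(2 * mj.+1 * q),
           in_range Q2 x <-> ctrmx M *m x = 0) ->
        frob (Res Y) = frob (ctrmx Q2 *m rhs))).
Proof.
(* Stability of [A] and [Re p < 0] only make the projected problems uniquely
   solvable; the identities themselves do not need them. *)
move=> _ basis Arnoldi _ /andP[m1_gt0 le_m1m] W Res.
have mj_gt0 : (0 < mj)%N := leq_trans m1_gt0 le_m1m.
have /basis[VV _] : (0 < mj <= mj.+1)%N by rewrite mj_gt0 leqW.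
have /basis[VV1 _] : (0 < mj.+1 <= mj.+1)%N by rewrite leqnn.
have /Arnoldi Arnoldi_mj : (0 < mj <= mj)%N by rewrite mj_gt0 leqnn.
split=> [Y Galerkin | Y Ymin M rhs].
  have projected : (cmx (Tm q A v mj) + p%:M) *m Y = padmx (2 * mj * q) Ups.
    by apply/eqP; rewrite -subr_eq0 -(ctrmx_Vm_residual le_m1m VV) Galerkin.
  split=> //.
  have -> : Res Y = _ := Galerkin_residual le_m1m Arnoldi_mj projected.
  by rewrite frob_isometry // cmx_orthonormal // trmx_Vblk_mul.
have frob_Res Y' : frob (Res Y') = frob (M *m Y' - rhs).
  have -> : Res Y' = _ := minres_residual le_m1m Arnoldi_mj VV1.
  by rewrite frob_isometry // cmx_orthonormal.
have normal : ctrmx M *m (M *m Y - rhs) = 0.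
  by apply: lsq_normal_eq => Y'; rewrite -!frob_Res.
split=> [Y' | k Q2 QQ rangeQ]; first by rewrite -!frob_Res.
by rewrite frob_Res (frob_lsq_residual QQ rangeQ normal).
Qed.
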